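(* Let $\mathcal{T}=(V,\mathsf{p})$ be a directed forest with leafless support $\mathring{\mathcal{T}}$. Then $v_0\in V$ is not a root of $\mathring{\mathcal{T}}$ if and only if $v_0\notin\mathrm{root}(\mathcal{T})$ and there exists a sequence $\{v_n\}_{n=1}^\infty\subseteq V$ such that $\mathsf{p}(v_{n+1})=v_n$ for all $n\in\{0,1,2,\dots\}$.
   Context: A directed forest is a pair $\mathcal{T}=(V,\mathsf{p})$ where $V$ is a nonempty set and $\mathsf{p}\colon V\to V$ satisfies: if $n\in\mathbb{N}$, $v\in V$ and $\mathsf{p}^n(v)=v$, then $\mathsf{p}(v)=v$. Roots: $\mathrm{root}(\mathcal{T})=\{v:\mathsf{p}(v)=v\}$. The forest is leafless if $\mathsf{p}(V)=V$. $(V,\mathsf{p}_1)$ is thinner than $(V,\mathsf{p}_2)$ if $\mathsf{p}_1(v)\in\{v,\mathsf{p}_2(v)\}$ for all $v\in V$ (a partial order). The leafless support $\mathring{\mathcal{T}}=(V,\mathring{\mathsf{p}})$ of $\mathcal{T}$ is the greatest (thickest) leafless directed forest on $V$ thinner than $\mathcal{T}$; such a greatest element exists. *)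

(* A directed forest on V: V nonempty, and p^n(v) = v for some n >= 1
   forces p(v) = v.  (n ranges over positive integers: with n = 0 the
   condition would force p = id.) *)
Definition directed_forest (V : Type) (p : V -> V) : Prop :=
  inhabited V /\
  forall (n : nat) (v : V), Nat.iter (S n) p v = v -> p v = v.

Definition is_root (V : Type) (p : V -> V) (v : V) : Prop := p v = v.

Definition leafless (V : Type) (p : V -> V) : Prop :=
  forall v : V, exists u : V, p u = v.

Definition thinner (V : Type) (p1 p2 : V -> V) : Prop :=
  forall v : V, p1 v = v \/ p1 v = p2 v.

Definition leafless_support (V : Type) (p q : V -> V) : Prop :=
  directed_forest V q /\ leafless V q /\ thinner V q p /\
  (forall r : V -> V, directed_forest V r -> leafless V r -> thinner V r p ->
     thinner V r q).

(* A non-root of the leafless support q has a q-preimage, which is again a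
   non-root, and q agrees with p off its roots; iterating a section of q gives
   an infinite p-path ending at v0.  Conversely, if v0 is not a p-root and ends
   an infinite p-path, restricting p to the points of that path (and making
   every other point a root) gives a leafless directed forest thinner than p,
   hence thinner than q, and it moves v0. *)

From Stdlib Require Import ClassicalEpsilon.

Definition backward_path (V : Type) (p : V -> V) (v : nat -> V) : Prop :=
  forall n : nat, p (v (S n)) = v n.

Definition backward_closed (V : Type) (p : V -> V) (A : V -> Prop) : Prop :=
  forall y : V, A y -> exists u : V, A u /\ p u = y.

Definition restrict (V : Type) (p : V -> V) (A : V -> Prop) (x : V) : V :=
  if excluded_middle_informative (A x) then p x else x.

Section Thinner.

Variables (V : Type) (p r : V -> V).
Hypothesis r_thinner : thinner V r p.

Lemma thinner_not_root (x : V) : ~ is_root V r x -> r x = p x.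
Proof.
  intros Hx. destruct (r_thinner x) as [H | H]; [contradiction | exact H].
Qed.

Lemma thinner_iter (n : nat) (x : V) :
  Nat.iter n r x = Nat.iter n p x \/ is_root V r (Nat.iter n r x).
Proof.
  induction n as [|n IH]; simpl; [left; reflexivity|].
  destruct IH as [IH | IH].
  - destruct (r_thinner (Nat.iter n r x)) as [H | H].
    + right. unfold is_root. rewrite H. exact H.
    + left. rewrite H, IH. reflexivity.
  - right. unfold is_root in *. rewrite IH. exact IH.
Qed.

Lemma thinner_directed_forest : directed_forest V p -> directed_forest V r.
Proof.
  intros [inhV p_forest]. split; [exact inhV|].
  intros n x Hx.
  destruct (thinner_iter (S n) x) as [H | H]; rewrite Hx in H; [|exact H].
  destruct (r_thinner x) as [Hr | Hr]; [exact Hr|].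
  rewrite Hr. apply (p_forest n). symmetry. exact H.
Qed.

End Thinner.

Section Leafless.

Variables (V : Type) (q : V -> V).
Hypothesis q_leafless : leafless V q.

Lemma leafless_section : exists g : V -> V, forall y : V, q (g y) = y.
Proof.
  exists (fun y => proj1_sig (constructive_indefinite_description _ (q_leafless y))).
  intros y. exact (proj2_sig (constructive_indefinite_description _ (q_leafless y))).
Qed.

Lemma preimage_not_root (u : V) : ~ is_root V q (q u) -> ~ is_root V q u.
Proof. unfold is_root. intros Hy Hu. rewrite Hu in Hy. apply Hy. exact Hu. Qed.

Lemma leafless_backward_path (x : V) :
  ~ is_root V q x ->
  exists v : nat -> V, v 0 = x /\ backward_path V q v /\
    forall n : nat, ~ is_root V q (v n).
Proof.
  intros Hx. destruct leafless_section as [g Hg].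
  exists (fun n => Nat.iter n g x). split; [reflexivity|]. split.
  - intros n. apply Hg.
  - induction n as [|n IH]; [exact Hx|].
    apply preimage_not_root. simpl. rewrite Hg. exact IH.
Qed.

End Leafless.

Section Restrict.

Variables (V : Type) (p : V -> V) (A : V -> Prop).

Lemma restrict_in (x : V) : A x -> restrict V p A x = p x.
Proof. intros Hx. unfold restrict. destruct excluded_middle_informative; tauto. Qed.

Lemma restrict_notin (x : V) : ~ A x -> restrict V p A x = x.
Proof. intros Hx. unfold restrict. destruct excluded_middle_informative; tauto. Qed.

Lemma restrict_thinner : thinner V (restrict V p A) p.
Proof. intros x. unfold restrict. destruct excluded_middle_informative; auto. Qed.

Lemma restrict_leafless : backward_closed V p A -> leafless V (restrict V p A).
Proof.
  intros A_closed y. destruct (classic (A y)) as [Hy | Hy].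
  - destruct (A_closed y Hy) as [u [Hu Hpu]].
    exists u. rewrite restrict_in by exact Hu. exact Hpu.
  - exists y. apply restrict_notin. exact Hy.
Qed.

End Restrict.

Lemma backward_path_range_closed (V : Type) (p : V -> V) (v : nat -> V) :
  backward_path V p v -> backward_closed V p (fun x => exists n, v n = x).
Proof.
  intros Hv y [n Hn]. exists (v (S n)). split; [exists (S n); reflexivity|].
  rewrite Hv. exact Hn.
Qed.

Lemma leafless_support_not_root (V : Type) (p q : V -> V) (A : V -> Prop) (x : V) :
  directed_forest V p -> leafless_support V p q -> backward_closed V p A ->
  A x -> ~ is_root V p x -> ~ is_root V q x.
Proof.
  intros p_forest [_ [_ [_ q_max]]] A_closed Hx Hpx Hqx.
  pose proof (restrict_thinner V p A) as r_thinner.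
  destruct (q_max _ (thinner_directed_forest V p _ r_thinner p_forest)
              (restrict_leafless V p A A_closed) r_thinner x) as [H | H];
    rewrite restrict_in in H by exact Hx.
  - exact (Hpx H).
  - apply Hpx. unfold is_root. rewrite H. exact Hqx.
Qed.

Theorem lemma4p5 (V : Type) (p q : V -> V)
  (hT : directed_forest V p) (hq : leafless_support V p q) (v0 : V) :
  ~ is_root V q v0 <->
  (~ is_root V p v0 /\
   exists v : nat -> V, v 0 = v0 /\ forall n : nat, p (v (S n)) = v n).
Proof.
  pose proof hq as [_ [q_leafless [q_thinner _]]]. split.
  - intros Hq.
    destruct (leafless_backward_path V q q_leafless v0 Hq) as [v [Hv0 [Hv Hroots]]].
    split.
    + unfold is_root. rewrite <- (thinner_not_root V p q q_thinner v0 Hq). exact Hq.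
    + exists v. split; [exact Hv0|]. intros n.
      rewrite <- (thinner_not_root V p q q_thinner _ (Hroots (S n))). apply Hv.
  - intros [Hp [v [Hv0 Hv]]].
    apply (leafless_support_not_root V p q _ v0 hT hq
             (backward_path_range_closed V p v Hv)); [exists 0; exact Hv0 | exact Hp].
Qed.
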